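(* Let a memory system $M$ consist of one elementary system and an information system $I=I_1\cdots I_N$ of $N$ elementary systems, all with ontic coordinates in $\mathbb{Z}_d$ or all in $\mathbb{R}$; order the joint coordinates as $(q_M,p_M,q_{I_1},p_{I_1},\dots)$. Let the state of $I$ be an arbitrary valid epistemic state $(W,\vec w)$, with $W$ spanned by $\vec w_1,\dots,\vec w_k$. Let $S^M$ be a symplectic transformation of $I$ and $\vec f=((S^M)^T)^{-1}\vec q_1$, where $\vec q_1$ is the position observable of $I_1$; let $T$ be a symplectic transformation of $M$ and $\vec v=(T^T)^{-1}\vec q$, where $\vec q$ is the position observable of $M$. Let the memory initially be in the state where the value of $\vec v$ is $0$, so the total initial state is $\big(\langle(\vec v,0,\dots,0)^T,(0,0,\vec w_1)^T,\dots,(0,0,\vec w_k)^T\rangle,(0,0,\vec w)^T\big)$. Let $\Phi$ be the symplectic transformation acting on $M$ and $I_1$ (identity on $I_2,\dots,I_N$) by $(q_{I_1},p_{I_1},q_M,p_M)\mapsto(q_{I_1},\,p_{I_1}-p_M,\,q_M+q_{I_1},\,p_M)$. Then the transformation $$\Gamma=(T\oplus\mathbb{1}_I)(\mathbb{1}_M\oplus S^M)\,\Phi\,(\mathbb{1}_M\oplus (S^M)^{-1})(T^{-1}\oplus\mathbb{1}_I)$$ correlates the value of $\vec v$ on the memory with the value of $\vec f$ on the information system: in the final state, every compatible ontic state $\vec m=(\vec m_M,\vec m_I)$ satisfies $\vec v^T\vec m_M=\vec f^T\vec m_I$. Moreover, if $d$ is prime or the systems are continuous, the marginal of the final state on $I$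 (tracing out the memory) is the mixture of the post-measurement states corresponding to all possible outcomes (those with nonzero probability) of a measurement of $\vec f$ (i.e. of $V_\pi=\langle\vec f\rangle$) on $(W,\vec w)$.
   Context: Toy theory (quadrature formalism): ontic states $\vec m\in\Omega=\mathbb{Z}_d^{2n}$ or $\mathbb{R}^{2n}$, coordinates $(q_1,p_1,\dots,q_n,p_n)$; an observable $\vec f\in\Omega$ takes value $\vec f^T\vec m$; the position observable of the $i$-th elementary system is the vector with a 1 in coordinate $q_i$ and zeros elsewhere. Poisson bracket $[\vec f,\vec g]=\sum_i(f_{2i-1}g_{2i}-f_{2i}g_{2i-1})$; a matrix is symplectic if it preserves this bracket. A valid epistemic state $(V,\vec v)$ has $V$ an isotropic subspace/submodule ($[\vec f,\vec g]=0$ on $V$); compatible ontic states are $V^\perp+\vec v$ ($V^\perp=\{\vec m:\vec f^T\vec m=0\ \forall\vec f\in V\}$), uniformly distributed. A symplectic $\Gamma$ acts by $\vec m\mapsto\Gamma\vec m$ and $(V,\vec v)\mapsto((\Gamma^T)^{-1}V,\Gamma\vec v)$. Tracing out a subsystem = marginalizing the uniform distribution. A measurement is an isotropic $V_\pi$, outcome $\vec v_\pi$ = cell $V_\pi^\perp+\vec v_\pi$; post-measurement state: $(V_\pi+V_{\text{commute}},\vec v')$ with $V_{\text{commute}}=\{\vec f\in V:[\vec f,\vec g]=0\ \forall \vec g\in V_\pi\}$ and $\vec v'\in(V_\pi^\perp+\vec v_\pi)\cap(V_{\text{commute}}^\perp+\vec v)$. A mixture of epistemic states is the uniform distribution on the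 union of their compatible ontic sets. *)

(* Ontic states of n elementary systems are column vectors of length 2n; the
   coordinates (q_1,p_1,...,q_n,p_n) are stored at 0-based indices
   (0,1,...,2n-2,2n-1), i.e. q_(i+1) is at index 2i and p_(i+1) at index 2i+1. *)
From HB Require Import structures.
From mathcomp Require Import all_boot all_order all_algebra.
From mathcomp Require Import reals.
Set Implicit Arguments. Unset Strict Implicit. Unset Printing Implicit Defensive.
Import Order.TTheory GRing.Theory Num.Theory.
Local Open Scope ring_scope.

Section Toy.
Variable K : comUnitRingType.

Definition dot m (f x : 'cV[K]_m) : K := (f^T *m x) 0 0.

(* Poisson bracket  [f,g] = sum_i (f_{q_i} g_{p_i} - f_{p_i} g_{q_i}) = f^T J g *)
Definition Jmx m : 'M[K]_m :=
  \matrix_(i < m, j < m)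
    ((~~ odd i && (j == i.+1 :> nat))%:R - (odd i && (i == j.+1 :> nat))%:R).
Definition pb m (f g : 'cV[K]_m) : K := (f^T *m Jmx m *m g) 0 0.

Definition symplectic m (G : 'M[K]_m) : Prop :=
  forall f g : 'cV[K]_m, pb (G *m f) (G *m g) = pb f g.

(* position observable of the (i+1)-th elementary system (0-based i) *)
Definition qpos m (i : nat) : 'cV[K]_m := \col_(j < m) (j == (2 * i)%N :> nat)%:R.

Definition gspan m (gs : seq 'cV[K]_m) : 'cV[K]_m -> Prop :=
  fun f => exists c : 'I_(size gs) -> K, f = \sum_(i < size gs) c i *: gs`_i.
Definition isotropic m (V : 'cV[K]_m -> Prop) : Prop :=
  forall f g, V f -> V g -> pb f g = 0.
Definition perp m (V : 'cV[K]_m -> Prop) : 'cV[K]_m -> Prop :=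
  fun x => forall f, V f -> dot f x = 0.
Definition sumsp m (V1 V2 : 'cV[K]_m -> Prop) : 'cV[K]_m -> Prop :=
  fun g => exists a b, V1 a /\ V2 b /\ g = a + b.

Definition compat m (V : 'cV[K]_m -> Prop) (v x : 'cV[K]_m) : Prop :=
  exists u, perp V u /\ x = u + v.

Definition act_sp m (G : 'M[K]_m) (V : 'cV[K]_m -> Prop) : 'cV[K]_m -> Prop :=
  fun g => exists f, V f /\ g = invmx G^T *m f.
Definition act_vec m (G : 'M[K]_m) (v : 'cV[K]_m) : 'cV[K]_m := G *m v.

Definition vcommute m (V Vpi : 'cV[K]_m -> Prop) : 'cV[K]_m -> Prop :=
  fun g => V g /\ forall h, Vpi h -> pb g h = 0.
(* outcome vpi has nonzero probability: its cell meets the compatible set *)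
Definition possible_outcome m (V : 'cV[K]_m -> Prop) (v : 'cV[K]_m)
  (Vpi : 'cV[K]_m -> Prop) (vpi : 'cV[K]_m) : Prop :=
  exists x, compat Vpi vpi x /\ compat V v x.
Definition post_meas m (V : 'cV[K]_m -> Prop) (v : 'cV[K]_m)
  (Vpi : 'cV[K]_m -> Prop) (vpi : 'cV[K]_m) : 'cV[K]_m -> Prop :=
  fun x => exists v', compat Vpi vpi v' /\ compat (vcommute V Vpi) v v' /\
                      compat (sumsp Vpi (vcommute V Vpi)) v' x.
(* mixture (support = union of compatible sets) of all post-measurement
   states over the possible outcomes *)
Definition meas_mixture m (V : 'cV[K]_m -> Prop) (v : 'cV[K]_m)
  (Vpi : 'cV[K]_m -> Prop) : 'cV[K]_m -> Prop :=
  fun x => exists vpi, possible_outcome V v Vpi vpi /\ post_meas V v Vpi vpi x.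

(* the map Phi on (M, I_1): q_M' = q_M + q_I1, p_I1' = p_I1 - p_M;
   joint coordinates (q_M,p_M,q_I1,p_I1,...) at indices 0,1,2,3,... *)
Definition Phi m : 'M[K]_m :=
  \matrix_(i < m, j < m)
    ((i == j :> nat)%:R + ((i == 0%N :> nat) && (j == 2%N :> nat))%:R
       - ((i == 3%N :> nat) && (j == 1%N :> nat))%:R).

Definition dsum_M N (T : 'M[K]_2) : 'M[K]_(2 + 2 * N) := block_mx T 0 0 1%:M.
Definition dsum_I N (S : 'M[K]_(2 * N)) : 'M[K]_(2 + 2 * N) := block_mx 1%:M 0 0 S.

Definition Gamma5 N (T : 'M[K]_2) (S : 'M[K]_(2 * N)) : 'M[K]_(2 + 2 * N) :=
  dsum_M N T *m dsum_I S *m Phi (2 + 2 * N) *m dsum_I (invmx S) *m dsum_M N (invmx T).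

Definition v_obs (T : 'M[K]_2) : 'cV[K]_2 := invmx T^T *m qpos 2 0.
Definition f_obs N (S : 'M[K]_(2 * N)) : 'cV[K]_(2 * N) := invmx S^T *m qpos (2 * N) 0.

Definition init_sp N (T : 'M[K]_2) (ws : seq 'cV[K]_(2 * N)) : 'cV[K]_(2 + 2 * N) -> Prop :=
  gspan (col_mx (v_obs T) 0 :: map (fun wi => col_mx 0 wi) ws).
Definition init_vec N (w : 'cV[K]_(2 * N)) : 'cV[K]_(2 + 2 * N) := col_mx 0 w.

Definition final_compat N (T : 'M[K]_2) (S : 'M[K]_(2 * N))
  (ws : seq 'cV[K]_(2 * N)) (w : 'cV[K]_(2 * N)) : 'cV[K]_(2 + 2 * N) -> Prop :=
  compat (act_sp (Gamma5 T S) (init_sp T ws)) (act_vec (Gamma5 T S) (init_vec w)).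

(* marginal on I (tracing out the memory): support of the marginal *)
Definition marginal_I N (C : 'cV[K]_(2 + 2 * N) -> Prop) : 'cV[K]_(2 * N) -> Prop :=
  fun mI => exists mM : 'cV[K]_2, C (col_mx mM mI).

Definition correlates N (T : 'M[K]_2) (S : 'M[K]_(2 * N))
  (ws : seq 'cV[K]_(2 * N)) (w : 'cV[K]_(2 * N)) : Prop :=
  forall x, final_compat T S ws w x ->
    dot (v_obs T) (usubmx x) = dot (f_obs S) (dsubmx x).

Definition marginal_is_mixture N (T : 'M[K]_2) (S : 'M[K]_(2 * N))
  (ws : seq 'cV[K]_(2 * N)) (w : 'cV[K]_(2 * N)) : Prop :=
  forall mI, marginal_I (final_compat T S ws w) mI <->
             meas_mixture (gspan ws) w (gspan [:: f_obs S]) mI.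

End Toy.

(* Conjugated by the local maps, Phi becomes
     Gamma (y_M, y_I) = (y_M + (f.y_I) T e_q,  y_I + (e_p.T^-1 y_M) J f),
   so Gamma adds the value of f to the value of v on the memory and moves the
   information system along J f, which does not change the value of f because
   [f, f] = 0.  As v vanishes on the initial memory, the two values agree
   afterwards.  Tracing out the memory leaves the set w + W^perp smeared along
   the line K J f.  Over a field, a functional vanishing on
   {g in W | [g, f] = 0} is a multiple of [., f] on W, and this identifies the
   smeared set with the union of the post-measurement cells. *)
From HB Require Import structures.
From mathcomp Require Import all_boot all_order all_algebra.
From mathcomp Require Import reals.
From mathcomp Require Import ring.
Set Implicit Arguments. Unset Strict Implicit. Unset Printing Implicit Defensive.
Import Order.TTheory GRing.Theory Num.Theory.
Local Open Scope ring_scope.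

Section Bilinear.
Variable K : comUnitRingType.

Definition evec m k : 'cV[K]_m := \col_(j < m) ((j : nat) == k)%:R.

Lemma evec_delta m k (hk : (k < m)%N) : evec m k = delta_mx (Ordinal hk) 0.
Proof. by apply/matrixP => i j; rewrite !mxE (ord1 j) eqxx andbT. Qed.

Lemma dotC m (f x : 'cV[K]_m) : dot f x = dot x f.
Proof. by rewrite /dot -[x^T *m f]trmxK trmx_mul trmxK [in RHS]mxE. Qed.

Lemma dotDr m (f x y : 'cV[K]_m) : dot f (x + y) = dot f x + dot f y.
Proof. by rewrite /dot mulmxDr mxE. Qed.

Lemma dotZr m (f x : 'cV[K]_m) a : dot f (a *: x) = a * dot f x.
Proof. by rewrite /dot -scalemxAr mxE. Qed.

Lemma dotNr m (f x : 'cV[K]_m) : dot f (- x) = - dot f x.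
Proof. by rewrite /dot mulmxN mxE. Qed.

Lemma dotBr m (f x y : 'cV[K]_m) : dot f (x - y) = dot f x - dot f y.
Proof. by rewrite dotDr dotNr. Qed.

Lemma dot0r m (f : 'cV[K]_m) : dot f 0 = 0.
Proof. by rewrite /dot mulmx0 mxE. Qed.

Lemma dotDl m (f g x : 'cV[K]_m) : dot (f + g) x = dot f x + dot g x.
Proof. by rewrite dotC dotDr !(dotC x). Qed.

Lemma dotZl m (f x : 'cV[K]_m) a : dot (a *: f) x = a * dot f x.
Proof. by rewrite dotC dotZr dotC. Qed.

Lemma dot0l m (f : 'cV[K]_m) : dot 0 f = 0.
Proof. by rewrite dotC dot0r. Qed.

Lemma dot_mulmxr m n (f : 'cV[K]_m) (A : 'M_(m, n)) x : dot f (A *m x) = dot (A^T *m f) x.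
Proof. by rewrite /dot trmx_mul trmxK mulmxA. Qed.

Lemma dot_col_mx m n (a c : 'cV[K]_m) (b d : 'cV[K]_n) :
  dot (col_mx a b) (col_mx c d) = dot a c + dot b d.
Proof. by rewrite /dot tr_col_mx mul_row_col mxE. Qed.

Lemma dot_sumr m (f : 'cV[K]_m) I (r : seq I) (P : pred I) (F : I -> 'cV_m) :
  dot f (\sum_(i <- r | P i) F i) = \sum_(i <- r | P i) dot f (F i).
Proof. by rewrite /dot mulmx_sumr summxE. Qed.

Lemma dot_invmx_tr m (A : 'M[K]_m) u y : dot (invmx A^T *m u) y = dot u (invmx A *m y).
Proof. by rewrite dotC dot_mulmxr trmx_inv trmxK dotC. Qed.

Lemma pbE m (f g : 'cV[K]_m) : pb f g = dot f (Jmx K m *m g).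
Proof. by rewrite /pb /dot mulmxA. Qed.

Lemma mul_outer m n (u : 'cV[K]_m) (v z : 'cV[K]_n) : u *m v^T *m z = dot v z *: u.
Proof. by rewrite -mulmxA [v^T *m z]mx11_scalar mul_mx_scalar. Qed.

Lemma dot_evec_neq m i j : i != j -> dot (evec m i) (evec m j) = 0.
Proof.
move=> hij; rewrite /dot mxE big1 // => k _; rewrite !mxE.
by have [->|_] := eqVneq (k : nat) i; rewrite ?(negbTE hij) ?mulr0 ?mul0r.
Qed.

Lemma dot_evec_eq m i : (i < m)%N -> dot (evec m i) (evec m i) = 1.
Proof. by move=> hi; rewrite (evec_delta hi) /dot trmx_delta -rowE !mxE !eqxx. Qed.

Lemma gspan_mem m (gs : seq 'cV[K]_m) g : g \in gs -> gspan gs g.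
Proof.
move=> hg; have hi : (index g gs < size gs)%N by rewrite index_mem.
exists (fun i => ((i : nat) == index g gs)%:R).
rewrite (bigD1 (Ordinal hi)) //= eqxx scale1r nth_index // big1 ?addr0 // => i hi'.
by rewrite -(inj_eq val_inj) /= in hi'; rewrite (negbTE hi') scale0r.
Qed.

Lemma gspan0 m (gs : seq 'cV[K]_m) : gspan gs 0.
Proof. by exists (fun _ => 0); rewrite big1 // => i _; rewrite scale0r. Qed.

Lemma gspan_lin m (gs : seq 'cV[K]_m) a b f g :
  gspan gs f -> gspan gs g -> gspan gs (a *: f + b *: g).
Proof.
move=> [c ->] [c' ->]; exists (fun i => a * c i + b * c' i).
rewrite !scaler_sumr -big_split /=; apply: eq_bigr => i _.
by rewrite scalerDl !scalerA.
Qed.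

Lemma gspan1P m (f g : 'cV[K]_m) : gspan [:: f] g <-> exists c, g = c *: f.
Proof.
split=> [[c ->]|[c ->]]; first by exists (c ord0); rewrite big_ord1.
by exists (fun=> c); rewrite big_ord1.
Qed.

Lemma perp_gspan m (gs : seq 'cV[K]_m) u :
  perp (gspan gs) u <-> (forall g, g \in gs -> dot g u = 0).
Proof.
split=> [h g hg|h f [c ->]]; first exact/h/gspan_mem.
rewrite dotC dot_sumr big1 // => i _.
by rewrite dotZr dotC h ?mulr0 // mem_nth.
Qed.

Lemma Jmx_entry m (i j : 'I_m) :
  Jmx K m i j = if odd i then - ((j : nat) == i.-1)%:R else ((j : nat) == i.+1)%:R.
Proof.
rewrite mxE; case ho: (odd i) => /=; last by rewrite subr0.
rewrite sub0r; move: ho; case: (nat_of_ord i) => [|i'] //= _.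
by rewrite eqSS eq_sym.
Qed.

Lemma Jmx_sqr m : ~~ odd m -> Jmx K m *m Jmx K m = - 1%:M.
Proof.
move=> hm; apply/matrixP => i k; rewrite !mxE.
pose p := if odd i then (i : nat).-1 else (i : nat).+1.
have hp : (p < m)%N.
  rewrite /p; case hi: (odd i); first exact: leq_ltn_trans (leq_pred _) (ltn_ord i).
  rewrite ltn_neqAle ltn_ord andbT; apply: contraNneq hm => <-.
  by rewrite /= hi.
have Jrow (j : 'I_m) : Jmx K m i j = (if odd i then -1 else 1) * ((j : nat) == p)%:R.
  by rewrite Jmx_entry /p; case: (odd i); rewrite ?mulN1r ?mul1r.
rewrite (bigD1 (Ordinal hp)) //= big1 ?addr0; last first.
  by move=> j; rewrite -(inj_eq val_inj) /= Jrow => /negbTE ->; rewrite mulr0 mul0r.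
rewrite Jrow eqxx mulr1 Jmx_entry /p /= -[i == k]/((i : nat) == k).
case: (nat_of_ord i) => [|a] /=; first by rewrite mul1r eq_sym.
by case ha: (odd a); rewrite /= ?negbK ha /= ?mul1r ?mulN1r ?opprK eq_sym.
Qed.

Lemma Jmx_evec0 m : (1 < m)%N -> Jmx K m *m evec m 0 = - evec m 1.
Proof.
move=> hm; rewrite (evec_delta (ltnW hm)) -colE; apply/matrixP => i j.
rewrite mxE Jmx_entry !mxE /=.
by case: (nat_of_ord i) => [|[|a]] //=; rewrite oppr0 ?if_same.
Qed.

Lemma symplectic_mx m (G : 'M[K]_m) : symplectic G -> G^T *m Jmx K m *m G = Jmx K m.
Proof.
move=> hG; apply/matrixP => i j.
have entry (A : 'M[K]_m) :
    ((delta_mx i 0 : 'cV_m)^T *m A *m (delta_mx j 0 : 'cV_m)) 0 0 = A i j.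
  by rewrite trmx_delta -rowE -colE !mxE.
rewrite -entry -[RHS]entry !mulmxA.
by have := hG (delta_mx i 0) (delta_mx j 0); rewrite /pb trmx_mul !mulmxA.
Qed.

Lemma symplectic_unit m (G : 'M[K]_m) : ~~ odd m -> symplectic G -> G \in unitmx.
Proof.
move=> hm hG; suff /mulmx1_unit[] : (- (Jmx K m *m G^T *m Jmx K m)) *m G = 1%:M by [].
by rewrite mulNmx -!mulmxA (mulmxA G^T) symplectic_mx // Jmx_sqr // opprK.
Qed.

Lemma symplectic_Jmx_invT m (G : 'M[K]_m) : ~~ odd m -> symplectic G ->
  Jmx K m *m invmx G^T = G *m Jmx K m.
Proof.
move=> hm hG; have hGT : G^T \in unitmx by rewrite unitmx_tr symplectic_unit.
have JG : Jmx K m *m G = invmx G^T *m Jmx K m.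
  by rewrite -{2}(symplectic_mx hG) !mulmxA mulVmx // mul1mx.
have JGJ : Jmx K m *m G *m Jmx K m = - invmx G^T.
  by rewrite JG -mulmxA Jmx_sqr // mulmxN mulmx1.
by rewrite -[invmx G^T]opprK -JGJ mulmxN !mulmxA Jmx_sqr // !mulNmx mul1mx opprK.
Qed.

End Bilinear.

Section EpistemicStates.
Variable K : comUnitRingType.

Lemma compatE m (V : 'cV[K]_m -> Prop) v x : compat V v x <-> perp V (x - v).
Proof.
split=> [[u [hu ->]]|hx]; first by rewrite addrK.
by exists (x - v); rewrite subrK.
Qed.

Lemma compat_act m (G : 'M[K]_m) V v x : G \in unitmx ->
  compat (act_sp G V) (act_vec G v) x <-> exists y, compat V v y /\ x = G *m y.
Proof.
move=> hG; have perp_act u : perp (act_sp G V) u <-> perp V (invmx G *m u).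
  split=> [hu f hf|hu _ [f [hf ->]]].
    by rewrite -dot_invmx_tr; apply: hu; exists f.
  by rewrite dot_invmx_tr; apply: hu.
split=> [/compatE hx|[y [/compatE hy ->]]].
  exists (invmx G *m x); split; last by rewrite mulKVmx.
  by apply/compatE; move/perp_act: hx; rewrite mulmxBr mulKmx.
by apply/compatE/perp_act; rewrite -mulmxBr mulKmx.
Qed.

Lemma vcommute1P m (V : 'cV[K]_m -> Prop) f g :
  vcommute V (gspan [:: f]) g <-> V g /\ pb g f = 0.
Proof.
split=> [[hg hc]|[hg hgf]]; first by split; last by apply/hc/gspan_mem/mem_head.
by split=> // h /gspan1P[c ->]; rewrite !pbE -scalemxAr dotZr -pbE hgf mulr0.
Qed.

Lemma meas_mixture_perp m (V : 'cV[K]_m -> Prop) w f x :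
  meas_mixture V w (gspan [:: f]) x -> perp (vcommute V (gspan [:: f])) (x - w).
Proof.
move=> [_ [_ [v' [_ [/compatE hv' /compatE hx]]]]] g hg.
rewrite -[x](subrK v') -addrA dotDr hv' // hx ?add0r //.
by exists 0, g; split; [exact: gspan0 | split; last by rewrite add0r].
Qed.

Lemma meas_mixture_shift m (V : 'cV[K]_m -> Prop) w f y t :
  pb f f = 0 -> perp V (y - w) ->
  meas_mixture V w (gspan [:: f]) (y + t *: (Jmx K m *m f)).
Proof.
move=> hff hy; set x := y + _.
have compat_refl (U : 'cV[K]_m -> Prop) : compat U x x.
  by apply/compatE => g _; rewrite subrr dot0r.
exists x; split.
  exists y; split; apply/compatE => //.
  move=> _ /gspan1P[c ->]; rewrite /x opprD addNKr dotNr dotZr dotZl -pbE hff.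
  by rewrite !mulr0 oppr0.
exists x; split=> //; split=> //.
apply/compatE => g /vcommute1P[hg hgf].
by rewrite /x addrAC dotDr hy // dotZr -pbE hgf mulr0 addr0.
Qed.

Section FieldLike.
Hypothesis unitK : forall a : K, a != 0 -> a \is a GRing.unit.

Lemma perp_gspan_subZ m (ws : seq 'cV[K]_m) (u z : 'cV[K]_m) :
  (forall g, gspan ws g -> dot g u = 0 -> dot g z = 0) ->
  exists t, perp (gspan ws) (z - t *: u).
Proof.
move=> hz; case: (boolP (all (fun g => dot g u == 0) ws)) => [/allP hu|/allPn[g0 hg0 hu0]].
  exists 0; rewrite scale0r subr0 => g hg; apply: hz => //.
  by move: g hg; apply/perp_gspan => g /hu /eqP.
set a := dot g0 u in hu0; exists (dot g0 z / a) => g hg.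
set b := dot g u; have hgg0 := gspan_lin a (- b) hg (gspan_mem hg0).
have := hz _ hgg0; rewrite !dotDl !dotZl -/a -/b mulNr mulrC addrN => /(_ erefl).
move/eqP; rewrite mulNr subr_eq0 => /eqP eab.
rewrite dotBr dotZr -/b -[dot g z](mulKr (unitK hu0)) eab.
ring.
Qed.

Lemma meas_mixtureP m (ws : seq 'cV[K]_m) w f x : pb f f = 0 ->
  meas_mixture (gspan ws) w (gspan [:: f]) x <->
  exists y t, perp (gspan ws) (y - w) /\ x = y + t *: (Jmx K m *m f).
Proof.
move=> hff; split=> [/meas_mixture_perp hx|[y [t [hy ->]]]]; last first.
  exact: meas_mixture_shift.
have [t ht] : exists t, perp (gspan ws) (x - w - t *: (Jmx K m *m f)).
  apply: perp_gspan_subZ => g hg; rewrite -pbE => hgf.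
  by apply: hx; apply/vcommute1P.
exists (x - t *: (Jmx K m *m f)), t; split; last by rewrite subrK.
by rewrite addrAC.
Qed.

End FieldLike.

End EpistemicStates.

Section Gamma.
Variables (K : comUnitRingType) (N : nat).

Definition qcopy : 'M[K]_(2, 2 * N) := evec K 2 0 *m (evec K (2 * N) 0)^T.
Definition pkick : 'M[K]_(2 * N, 2) := - (evec K (2 * N) 1 *m (evec K 2 1)^T).

Lemma Phi_block : Phi K (2 + 2 * N) = block_mx 1%:M qcopy pkick 1%:M.
Proof.
apply/matrixP => i j; rewrite [LHS]mxE.
case: (split_ordP i) => i1 ->; case: (split_ordP j) => j1 ->;
  rewrite ?block_mxEul ?block_mxEur ?block_mxEdl ?block_mxEdr !mxE ?big_ord1 ?mxE
          /= ?add2n ?eqSS /=.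
- by case: i1 j1 => [[|[|?]] ?] [[|[|?]] ?]; rewrite //= ?addr0 ?subr0.
- by case: i1 => [[|[|?]] ?]; rewrite //= ?mul1r ?mul0r ?addr0 ?subr0 ?add0r.
- by case: j1 => [[|[|?]] ?]; rewrite //= ?mulr1 ?mulr0 ?andbT ?andbF ?add0r ?addr0.
- by rewrite [(_ == 0)%N]/= andbF addr0 subr0.
Qed.

Lemma qcopy_pkick : qcopy *m pkick = 0.
Proof.
by rewrite /qcopy /pkick mulmxN mulmxA mul_outer dot_evec_neq // scale0r mul0mx oppr0.
Qed.

Lemma pkick_qcopy : pkick *m qcopy = 0.
Proof.
by rewrite /qcopy /pkick mulNmx mulmxA mul_outer dot_evec_neq // scale0r mul0mx oppr0.
Qed.

Lemma Phi_unit : Phi K (2 + 2 * N) \in unitmx.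
Proof.
suff /mulmx1_unit[] : Phi K (2 + 2 * N) *m block_mx 1%:M (- qcopy) (- pkick) 1%:M = 1%:M.
  by [].
rewrite Phi_block mulmx_block (mulmxN qcopy) (mulmxN pkick) qcopy_pkick pkick_qcopy.
by rewrite !mul1mx !mulmx1 !oppr0 addr0 add0r addNr subrr scalar_mx_block.
Qed.

Variables (S : 'M[K]_(2 * N)) (T : 'M[K]_2).
Hypotheses (S_unit : S \in unitmx) (T_unit : T \in unitmx).

Lemma Gamma5_unit : Gamma5 T S \in unitmx.
Proof.
rewrite /Gamma5 /dsum_M /dsum_I !unitmx_mul !block_diag_mx_unit !unitmx1 !unitmx_inv.
by rewrite S_unit T_unit Phi_unit.
Qed.

Lemma Gamma5_col (yM : 'cV[K]_2) (yI : 'cV[K]_(2 * N)) : Gamma5 T S *m col_mx yM yI =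
  col_mx (yM + T *m (qcopy *m (invmx S *m yI))) (yI + S *m (pkick *m (invmx T *m yM))).
Proof.
rewrite /Gamma5 /dsum_M /dsum_I Phi_block -5!mulmxA !mul_block_col.
rewrite !mul1mx !mul0mx !addr0 !add0r !mulmxDr !mulKVmx //.
by congr col_mx; [rewrite /qcopy !mulmxA | rewrite addrC].
Qed.

End Gamma.

Section Theorem5.
Variables (K : comUnitRingType) (N : nat) (ws : seq 'cV[K]_(2 * N)) (w : 'cV[K]_(2 * N)).
Variables (S : 'M[K]_(2 * N)) (T : 'M[K]_2).

Lemma compat_init yM yI :
  compat (init_sp T ws) (init_vec w) (col_mx yM yI) <->
  dot (v_obs T) yM = 0 /\ perp (gspan ws) (yI - w).
Proof.
rewrite compatE /init_sp /init_vec opp_col_mx add_col_mx oppr0 addr0 !perp_gspan.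
split=> [h|[hv hy] _ /predU1P[->|/mapP[g hg ->]]].
- split; first by have := h _ (mem_head _ _); rewrite dot_col_mx dot0l addr0.
  move=> g hg; have := h (col_mx 0 g); rewrite dot_col_mx dot0l add0r; apply.
  by rewrite inE; apply/orP; right; apply/mapP; exists g.
- by rewrite dot_col_mx dot0l addr0.
- by rewrite dot_col_mx dot0l add0r hy.
Qed.

Hypotheses (N_gt0 : (0 < N)%N) (S_sympl : symplectic S) (T_sympl : symplectic T).

Let S_unit : S \in unitmx.
Proof. by rewrite symplectic_unit // mul2n odd_double. Qed.

Let T_unit : T \in unitmx.
Proof. exact: symplectic_unit. Qed.

Lemma final_compatP x : final_compat T S ws w x <->
  exists yM yI, [/\ dot (v_obs T) yM = 0, perp (gspan ws) (yI - w) &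
                    x = Gamma5 T S *m col_mx yM yI].
Proof.
rewrite /final_compat compat_act ?Gamma5_unit //.
split=> [[y [hy ->]]|[yM [yI [hv hy ->]]]].
  rewrite -[y]vsubmxK in hy *; have [hv hy'] := (compat_init _ _).1 hy.
  by exists (usubmx y), (dsubmx y).
by exists (col_mx yM yI); split => //; apply/compat_init.
Qed.

Lemma v_obs_Gamma5 yM yI :
  dot (v_obs T) (usubmx (Gamma5 T S *m col_mx yM yI)) = dot (v_obs T) yM + dot (f_obs S) yI.
Proof.
rewrite Gamma5_col // col_mxKu dotDr /v_obs /f_obs !dot_invmx_tr mulKmx //.
by rewrite /qcopy mul_outer dotZr dot_evec_eq // mulr1.
Qed.

Lemma f_obs_Gamma5 yM yI :
  dot (f_obs S) (dsubmx (Gamma5 T S *m col_mx yM yI)) = dot (f_obs S) yI.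
Proof.
rewrite Gamma5_col // col_mxKd dotDr /f_obs !dot_invmx_tr mulKmx //.
by rewrite /pkick mulNmx mul_outer dotNr dotZr dot_evec_neq // mulr0 oppr0 addr0.
Qed.

Lemma correlates_Gamma5 : correlates T S ws w.
Proof.
move=> x /final_compatP[yM [yI [hv _ ->]]].
by rewrite v_obs_Gamma5 f_obs_Gamma5 hv add0r.
Qed.

Lemma Jmx_f_obs : Jmx K (2 * N) *m f_obs S = - (S *m evec K (2 * N) 1).
Proof.
have N2_gt1 : (1 < 2 * N)%N by rewrite mul2n -addnn -addn1 leq_add.
rewrite /f_obs mulmxA symplectic_Jmx_invT ?mul2n ?odd_double //.
by rewrite -mulmxA Jmx_evec0 // mulmxN.
Qed.

Lemma pb_f_obs : pb (f_obs S) (f_obs S) = 0.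
Proof.
rewrite pbE Jmx_f_obs dotNr [in LHS]/f_obs dot_invmx_tr mulKmx //.
by rewrite dot_evec_neq // oppr0.
Qed.

Lemma Gamma5_dsub yM yI : dsubmx (Gamma5 T S *m col_mx yM yI) =
  yI + dot (evec K 2 1) (invmx T *m yM) *: (Jmx K (2 * N) *m f_obs S).
Proof.
rewrite Gamma5_col // col_mxKd Jmx_f_obs /pkick mulNmx mul_outer mulmxN scalerN.
by rewrite scalemxAr.
Qed.

Lemma marginal_finalP mI : marginal_I (final_compat T S ws w) mI <->
  exists y t, perp (gspan ws) (y - w) /\ mI = y + t *: (Jmx K (2 * N) *m f_obs S).
Proof.
split=> [[mM /final_compatP[yM [yI [_ hy e]]]]|[y [t [hy ->]]]].
  by exists yI, (dot (evec K 2 1) (invmx T *m yM)); rewrite -Gamma5_dsub -e col_mxKd.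
pose yM := T *m (t *: evec K 2 1).
have T_yM : invmx T *m yM = t *: evec K 2 1 by rewrite mulKmx.
exists (usubmx (Gamma5 T S *m col_mx yM y)); apply/final_compatP; exists yM, y; split=> //.
  by rewrite /v_obs dot_invmx_tr T_yM dotZr dot_evec_neq // mulr0.
by rewrite -[RHS]vsubmxK Gamma5_dsub T_yM dotZr dot_evec_eq // mulr1.
Qed.

Lemma marginal_is_mixture_Gamma5 :
  (forall a : K, a != 0 -> a \is a GRing.unit) -> marginal_is_mixture T S ws w.
Proof.
move=> unitK mI; rewrite marginal_finalP meas_mixtureP //.
exact: pb_f_obs.
Qed.

End Theorem5.

Lemma Zp_unit_prime d : prime d -> forall a : 'Z_d, a != 0 -> a \is a GRing.unit.
Proof.
move=> d_prime a a_neq0; have d_gt1 := prime_gt1 d_prime.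
rewrite -[a]natr_Zp unitZpE // prime_coprime // gtnNdvd //.
  by rewrite lt0n; apply: contra a_neq0.
by case: a a_neq0 => k /= + _; rewrite Zp_cast.
Qed.

Theorem theorem5 :
  (* discrete case: coordinates in Z_d *)
  (forall (d N : nat) (ws : seq 'cV['Z_d]_(2 * N)) (w : 'cV['Z_d]_(2 * N))
          (S : 'M['Z_d]_(2 * N)) (T : 'M['Z_d]_2),
      (1 < d)%N -> (0 < N)%N ->
      isotropic (gspan ws) -> symplectic S -> symplectic T ->
      correlates T S ws w /\ (prime d -> marginal_is_mixture T S ws w)) /\
  (* continuous case: coordinates in the reals *)
  (forall (R : realType) (N : nat) (ws : seq 'cV[R]_(2 * N)) (w : 'cV[R]_(2 * N))
          (S : 'M[R]_(2 * N)) (T : 'M[R]_2),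
      (0 < N)%N ->
      isotropic (gspan ws) -> symplectic S -> symplectic T ->
      correlates T S ws w /\ marginal_is_mixture T S ws w).
Proof.
split.
- move=> d N ws w S T _ N_gt0 _ S_sympl T_sympl.
  split=> [|d_prime]; first exact: correlates_Gamma5.
  exact/marginal_is_mixture_Gamma5/Zp_unit_prime.
- move=> R N ws w S T N_gt0 _ S_sympl T_sympl.
  split; first exact: correlates_Gamma5.
  by apply: marginal_is_mixture_Gamma5 => // a; rewrite unitfE.
Qed.
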